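(* Let $\{\mathcal{N}_t\}_{t=1}^h$ be a time series of power network descriptions as in the context, sharing the same private line conductances $\mathbf{g}\in\mathbb{R}^n$ and susceptances $\mathbf{b}\in\mathbb{R}^n$. Fix $\alpha>0$, $\epsilon>0$, $\beta>0$, $\lambda>0$. Then the Multi-step Power Lines Obfuscation (MPLO) mechanism described in the context, viewed as a randomized algorithm mapping the private line-parameter data to the released network descriptions $\{\dot{\mathcal{N}}_t\}_{t=1}^h$, is $\epsilon$-differentially private with respect to the $\alpha$-indistinguishability adjacency relation.
   Context: Each $\mathcal{N}_t$ ($t=1,\dots,h$) has the same buses $N$, the same $n$ directed lines $E$ (with reversals $E^R$), the same line admittances $Y_{ij}=g_{ij}+\mathbf{i}b_{ij}$, and the same public bounds (voltage bounds $v^l_i,v^u_i$, generator bounds $S^{gl}_i,S^{gu}_i$, angle limits $\theta^\Delta_{ij}$, thermal limits $s^u_{ij}$, cost coefficients $c_{0i},c_{1i},c_{2i}$, slack bus $s$), but time-dependent public demands $S^d_i(t)$; $O^*(t)>0$ is the public optimal AC-OPF cost of $\mathcal{N}_t$. The ratio vector $\mathbf r=(r_{ij})$ and the partition of lines by voltage level ($E(v)$, $n_v=|E(v)|$, each line in exactly one $E(v)$) are public. $\mathrm{cost}(S^g_i)=c_{2i}(\Re S^g_i)^2+c_{1i}\Re S^g_i+c_{0i}$. $\mathrm{Lap}(\lambda')$ has density $\frac{1}{2\lambda'}e^{-|x|/\lambda'}$. Differential privacy: private datasets (line-parameter vectors) $D\sim_\alpha D'$ if they differ in a single coordinate by at most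 $\alpha$ and agree elsewhere; $\mathcal{A}$ is $\epsilon$-DP if $\Pr[\mathcal{A}(D)\in O]\le e^\epsilon\Pr[\mathcal{A}(D')\in O]$ for all such $D,D'$ and measurable $O$. MPLO mechanism (independent noise): 1. $\tilde{\mathbf g}=\mathbf g+\mathrm{Lap}(3\alpha/\epsilon)^n$; 2. $\tilde b_{ij}=r_{ij}\tilde g_{ij}$; 3. for each voltage level $v$: $\tilde\mu^v_{\mathbf g}=\frac1{n_v}\sum_{E(v)}g_{ij}+\mathrm{Lap}(3\alpha/(n_v\epsilon))$, $\tilde\mu^v_{\mathbf b}=\frac1{n_v}\sum_{E(v)}b_{ij}+\mathrm{Lap}(3\alpha/(n_v\epsilon))$; 4. solve (selecting a solution by any fixed rule), with variables $\dot Y_{ij}=\dot g_{ij}+\mathbf i\dot b_{ij}$ and, for each $t$, $S^g_i(t),V_i(t),S_{ij}(t)$: minimize $\|\dot{\mathbf g}-\tilde{\mathbf g}\|_2^2+\|\dot{\mathbf b}-\tilde{\mathbf b}\|_2^2$ subject to $\tilde\mu^v_{\mathbf g}/\lambda\le\dot g_{ij}\le\lambda\tilde\mu^v_{\mathbf g}$ and $\tilde\mu^v_{\mathbf b}/\lambda\le\dot b_{ij}\le\lambda\tilde\mu^v_{\mathbf b}$ for lines at level $v$, and for every $t$: $\frac{|\sum_i\mathrm{cost}(S^g_i(t))-O^*(t)|}{O^*(t)}\le\beta$, $\angle V_s(t)=0$, $v^l_i\le|V_i(t)|\le v^u_i$, $S^{gl}_i\le S^g_i(t)\le S^{gu}_i$,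 $S^g_i(t)-S^d_i(t)=\sum_{(i,j)\in E\cup E^R}S_{ij}(t)$, $-\theta^\Delta_{ij}\le\angle(V_i(t)V_j^*(t))\le\theta^\Delta_{ij}$, $|S_{ij}(t)|\le s^u_{ij}$, $S_{ij}(t)=\dot Y^*_{ij}|V_i(t)|^2-\dot Y^*_{ij}V_i(t)V_j^*(t)$. Output: for each $t$, $\dot{\mathcal N}_t$ equal to $\mathcal N_t$ with admittances replaced by $\dot Y$. *)

From HB Require Import structures.
From mathcomp Require Import all_boot all_order all_algebra.
From mathcomp Require Import all_classical all_reals all_analysis.
From mathcomp Require Import complex.
Set Implicit Arguments. Unset Strict Implicit. Unset Printing Implicit Defensive.
Import Order.TTheory GRing.Theory Num.Theory.
Local Open Scope ring_scope.
Local Open Scope classical_set_scope.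

Definition cmod (R : realType) (z : R[i]) : R :=
  Num.sqrt (complex.Re z ^+ 2 + complex.Im z ^+ 2).

(* principal argument in (-pi, pi], with the convention arg 0 = 0 *)
Definition carg (R : realType) (z : R[i]) : R :=
  if z == 0 then 0
  else if 0 <= complex.Im z then acos (complex.Re z / cmod z)
  else - acos (complex.Re z / cmod z).

(* componentwise order on complex numbers (real and reactive parts),
   as used for the generator bounds  S^gl <= S^g <= S^gu *)
Definition cle (R : realType) (z w : R[i]) : Prop :=
  complex.Re z <= complex.Re w /\ complex.Im z <= complex.Im w.

(* Public data of the time series N_1..N_h.                                 *)
(*  buses 'I_N, directed lines 'I_n (line e goes from fr e to tt e;         *)
(*  its reversal is (tt e, fr e)), voltage levels 'I_m (lev e = level of e),*)
(*  time steps 'I_h.                                                        *)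
Record pubnet (R : realType) (N n m h : nat) := PubNet {
  fr : 'I_n -> 'I_N;
  tt : 'I_n -> 'I_N;
  vl : 'I_N -> R;
  vu : 'I_N -> R;
  Sgl : 'I_N -> R[i];
  Sgu : 'I_N -> R[i];
  thD : 'I_n -> R;
  su : 'I_n -> R;
  c0 : 'I_N -> R;
  c1 : 'I_N -> R;
  c2 : 'I_N -> R;
  slack : 'I_N;
  Sd : 'I_h -> 'I_N -> R[i];
  Ostar : 'I_h -> R;         (* optimal AC-OPF cost O*(t) *)
  ratio : 'I_n -> R;
  lev : 'I_n -> 'I_m
}.

Section MPLO.
Variables (R : realType) (N n m h : nat) (P : pubnet R N n m h).

Definition nlev (v : 'I_m) : nat := #|[set e | lev P e == v]|.

Definition gcost (i : 'I_N) (Sg : R[i]) : R :=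
  c2 P i * (complex.Re Sg) ^+ 2 + c1 P i * complex.Re Sg + c0 P i.

(* The AC-OPF constraints of time step t for admittances Y (the existential
   quantifies the per-step variables S^g(t), V(t), S_ij(t) for (i,j) in E
   (Sf) and for the reversed lines in E^R (Sr)). *)
Definition opf_feasible (beta : R) (t : 'I_h) (Y : 'I_n -> R[i]) : Prop :=
  exists (Sg V : 'I_N -> R[i]) (Sf Sr : 'I_n -> R[i]),
    `|(\sum_(i < N) gcost i (Sg i)) - Ostar P t| / Ostar P t <= beta
    /\ carg (V (slack P)) = 0
    /\ (forall i, vl P i <= cmod (V i) <= vu P i)
    /\ (forall i, cle (Sgl P i) (Sg i) /\ cle (Sg i) (Sgu P i))
    /\ (forall i, Sg i - Sd P t i
                  = \sum_(e < n | fr P e == i) Sf e + \sum_(e < n | tt P e == i) Sr e)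
    /\ (forall e, - thD P e <= carg (V (fr P e) * (V (tt P e))^*) <= thD P e)
    /\ (forall e, cmod (Sf e) <= su P e /\ cmod (Sr e) <= su P e)
    /\ (forall e, Sf e = (Y e)^* * (((cmod (V (fr P e))) ^+ 2)%:C)%C
                         - (Y e)^* * V (fr P e) * (V (tt P e))^*)
    /\ (forall e, Sr e = (Y e)^* * (((cmod (V (tt P e))) ^+ 2)%:C)%C
                         - (Y e)^* * V (tt P e) * (V (fr P e))^*).

(* Feasible set of the step-4 problem, for noisy level means mug, mub. *)
Definition mplo_feasible (beta lam : R) (mug mub : m.-tuple R)
    (Yd : n.-tuple R * n.-tuple R) : Prop :=
  (forall e : 'I_n,
      tnth mug (lev P e) / lam <= tnth Yd.1 e <= lam * tnth mug (lev P e)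
   /\ tnth mub (lev P e) / lam <= tnth Yd.2 e <= lam * tnth mub (lev P e))
  /\ (forall t : 'I_h,
        opf_feasible beta t (fun e => Complex (tnth Yd.1 e) (tnth Yd.2 e))).

Definition mplo_obj (gt bt : n.-tuple R) (Yd : n.-tuple R * n.-tuple R) : R :=
  \sum_(e < n) (tnth Yd.1 e - tnth gt e) ^+ 2
  + \sum_(e < n) (tnth Yd.2 e - tnth bt e) ^+ 2.

Definition mplo_optimal (beta lam : R) (gt bt : n.-tuple R) (mug mub : m.-tuple R)
    (Yd : n.-tuple R * n.-tuple R) : Prop :=
  mplo_feasible beta lam mug mub Yd
  /\ forall Yd', mplo_feasible beta lam mug mub Yd' ->
                 mplo_obj gt bt Yd <= mplo_obj gt bt Yd'.

(* A "fixed selection rule" for step 4: a function of the noisy inputs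
   that returns an optimal solution whenever one exists (arbitrary, but
   fixed, output otherwise). *)
Definition selection_rule (beta lam : R)
    (sel : n.-tuple R -> n.-tuple R -> m.-tuple R -> m.-tuple R ->
           n.-tuple R * n.-tuple R) : Prop :=
  forall gt bt mug mub,
    (exists Yd, mplo_optimal beta lam gt bt mug mub Yd) ->
    mplo_optimal beta lam gt bt mug mub (sel gt bt mug mub).

(* Noise space: (noise on g) * (noise on level means of g) * (of b). *)
Definition noise_space := ((n.-tuple R * m.-tuple R) * m.-tuple R)%type.

(* The MPLO mechanism as a deterministic function of the private data
   (g, b) and of the noise z; output = (gdot, bdot), i.e. the admittances
   Ydot = gdot + i bdot that replace Y in every released N_t. *)
Definition mplo_out
    (sel : n.-tuple R -> n.-tuple R -> m.-tuple R -> m.-tuple R ->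
           n.-tuple R * n.-tuple R)
    (D : n.-tuple R * n.-tuple R) (z : noise_space) : n.-tuple R * n.-tuple R :=
  let g := D.1 in let b := D.2 in
  let gt := [tuple tnth g e + tnth z.1.1 e | e < n] in
  let bt := [tuple ratio P e * tnth gt e | e < n] in
  let mug := [tuple (nlev v)%:R^-1 * (\sum_(e < n | lev P e == v) tnth g e)
                    + tnth z.1.2 v | v < m] in
  let mub := [tuple (nlev v)%:R^-1 * (\sum_(e < n | lev P e == v) tnth b e)
                    + tnth z.2 v | v < m] in
  sel gt bt mug mub.

End MPLO.

Definition lap_pdf (R : realType) (lam' x : R) : R :=
  (2 * lam')^-1 * expR (- (`|x| / lam')).

Fixpoint iint (R : realType) (k : nat) : (k.-tuple R -> \bar R) -> \bar R :=
  match k return (k.-tuple R -> \bar R) -> \bar R with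
  | 0 => fun F => F [tuple]
  | k'.+1 => fun F =>
      (\int[@lebesgue_measure R]_x iint (fun t => F (cons_tuple x t)))%E
  end.

Definition mplo_noise_prob (R : realType) (N n m h : nat) (P : pubnet R N n m h)
    (alpha eps : R) (E : set (noise_space R n m)) : \bar R :=
  iint (fun zg => iint (fun zmg => iint (fun zmb =>
    ((\1_E ((zg, zmg, zmb) : noise_space R n m))
     * (\prod_(e < n) lap_pdf (3 * alpha / eps) (tnth zg e))
     * (\prod_(v < m) lap_pdf (3 * alpha / ((nlev P v)%:R * eps)) (tnth zmg v))
     * (\prod_(v < m) lap_pdf (3 * alpha / ((nlev P v)%:R * eps)) (tnth zmb v)))%:E))).

Definition alpha_adj (R : realType) (n : nat) (alpha : R)
    (D D' : n.-tuple R * n.-tuple R) : Prop :=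
  (exists e : 'I_n, `|tnth D.1 e - tnth D'.1 e| <= alpha
      /\ (forall e', e' != e -> tnth D.1 e' = tnth D'.1 e') /\ D.2 = D'.2)
  \/
  (exists e : 'I_n, `|tnth D.2 e - tnth D'.2 e| <= alpha
      /\ (forall e', e' != e -> tnth D.2 e' = tnth D'.2 e') /\ D.1 = D'.1).

Definition differentially_private (R : realType) (d : measure_display)
    (Noise : measurableType d) (Data Out : Type)
    (adj : Data -> Data -> Prop) (eps : R) (Pr : set Noise -> \bar R)
    (M : Data -> Noise -> Out) : Prop :=
  forall D D', adj D D' ->
  forall O : set Out,
    measurable (M D @^-1` O) -> measurable (M D' @^-1` O) ->
    (Pr (M D @^-1` O) <= (expR eps)%:E * Pr (M D' @^-1` O))%E.

(* Idea: the mechanism is a deterministic function of the data and of the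
   Laplace noise z.  For adjacent datasets D, D', shifting the noise by the
   difference s of the perturbed statistics (g and the level means of g and b)
   gives M D z = M D' (z + s).  By translation invariance of Lebesgue measure,
   Pr[M D in O] = int 1_O(M D' (z + s)) p(z) dz, and the Laplace density
   satisfies p(z) <= exp(sum_i |s_i| / scale_i) p(z + s), where the exponent is
   at most eps because each statistic has sensitivity at most alpha relative
   to its scale. *)

From HB Require Import structures.
From mathcomp Require Import all_boot all_order all_algebra.
From mathcomp Require Import all_classical all_reals all_analysis.
From mathcomp Require Import complex.
From mathcomp Require Import ring lra.
Set Implicit Arguments. Unset Strict Implicit. Unset Printing Implicit Defensive.
Import Order.TTheory GRing.Theory Num.Theory.
Local Open Scope ring_scope.
Local Open Scope classical_set_scope.

Import HBNNSimple.

(* The integrands produced by [iint] need not be measurable, so monotonicity,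
   scaling and translation invariance are proved directly from the definition
   of the integral as a supremum over simple functions below it. *)
Section ge0_integral_nonmeasurable.
Local Open Scope ereal_scope.
Context d (T : measurableType d) (R : realType).
Variable mu : {measure set T -> \bar R}.

Lemma ge0_le_integralT (f g : T -> \bar R) :
  (forall x, 0 <= f x) -> (forall x, f x <= g x) ->
  \int[mu]_x f x <= \int[mu]_x g x.
Proof.
move=> f0 fg; have g0 x : 0 <= g x by exact: le_trans (f0 x) (fg x).
rewrite !ge0_integralTE//; apply: ereal_sup_le => _ [h hf <-].
by exists h => // x; exact: le_trans (hf x) (fg x).
Qed.

Lemma ge0_integralZlT_le (c : R) (f : T -> \bar R) :
  (0 < c)%R -> (forall x, 0 <= f x) ->
  \int[mu]_x (c%:E * f x) <= c%:E * \int[mu]_x f x.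
Proof.
move=> c0 f0; have cf0 x : 0 <= c%:E * f x by rewrite mule_ge0// lee_fin ltW.
rewrite !ge0_integralTE//; apply: ge_ereal_sup => _ [h hcf <-].
have c'0 : (0 <= c^-1)%R by rewrite invr_ge0 ltW.
have cc' : (c * c^-1 = 1)%R by rewrite divff ?gt_eqF.
pose h' := scale_nnsfun h c'0.
have -> : sintegral mu h = c%:E * sintegral mu h'.
  by rewrite sintegralrM muleA -EFinM cc' mul1e.
rewrite lee_pmul2l ?lte_fin//; apply: ereal_sup_ubound; exists h' => //= x.
by rewrite -(@lee_pmul2l _ c%:E) ?lte_fin// -EFinM mulrA cc' mul1r.
Qed.

End ge0_integral_nonmeasurable.

Section lebesgue_shift_invariance.
Context {R : realType}.
Local Notation mu := (@lebesgue_measure R).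

Lemma measurable_shift (a : R) : measurable_fun [set: R] (shift a).
Proof. by apply: measurable_realfun.measurable_funD. Qed.

Lemma lebesgue_measure_shift (a : R) (A : set R) : measurable A ->
  mu (shift a @^-1` A) = mu A.
Proof.
move=> mA.
unshelve epose proof (@lebesgue_measure_unique R
  (pushforward mu (shift a : R -> measurableTypeR R))) as mu_shift.
  exact: measurable_shift.
apply/esym/mu_shift => // _ [[x y] _ <-]; rewrite /pushforward /=.
transitivity (mu `]x - a, y - a]); last first.
  by congr (mu _); apply/seteqP; split => z /=; rewrite !in_itv/= lerBrDr ltrBlDr.
rewrite !lebesgue_measure_itv/= !lte_fin ltrD2r.
by case: ifP => // _; rewrite -!EFinD opprB addrA subrK.
Qed.

Definition shift_nnsfun_fun (h : {nnsfun measurableTypeR R >-> R}) (a : R)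
  : measurableTypeR R -> R := h \o shift a.

Lemma shift_nnsfun_measurable h a :
  measurable_fun [set: measurableTypeR R] (shift_nnsfun_fun h a).
Proof. by apply: measurableT_comp => //; exact: measurable_shift. Qed.

HB.instance Definition _ h a := isMeasurableFun.Build _ _ _ _
  (shift_nnsfun_fun h a) (shift_nnsfun_measurable h a).

Lemma shift_nnsfun_finite h a : finite_set (range (shift_nnsfun_fun h a)).
Proof. by apply: sub_finite_set (fimfunP h) => _ [x _ <-]; exists (shift a x). Qed.

HB.instance Definition _ h a := FiniteImage.Build _ _
  (shift_nnsfun_fun h a) (shift_nnsfun_finite h a).

Lemma shift_nnsfun_ge0 h a x : 0 <= shift_nnsfun_fun h a x.
Proof. exact: fun_ge0. Qed.

HB.instance Definition _ h a := isNonNegFun.Build _ _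
  (shift_nnsfun_fun h a) (shift_nnsfun_ge0 h a).

Definition shift_nnsfun h a : {nnsfun measurableTypeR R >-> R} :=
  shift_nnsfun_fun h a.

Lemma sintegral_shift h a : sintegral mu (shift_nnsfun h a) = sintegral mu h.
Proof.
rewrite !sintegralET; apply: eq_fsbigr => r _; congr (_ * _)%E.
rewrite -[LHS]/(mu (shift a @^-1` (h @^-1` [set r]))) lebesgue_measure_shift//.
by have := measurable_funP h measurableT [set r] (measurable_set1 r); rewrite setTI.
Qed.

Local Open Scope ereal_scope.

Lemma ge0_integral_shift_le (a : R) (f : R -> \bar R) : (forall x, 0 <= f x) ->
  \int[mu]_x f (x + a)%R <= \int[mu]_x f x.
Proof.
move=> f0; rewrite !ge0_integralTE//; apply: ge_ereal_sup => _ [h hf <-].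
rewrite -(sintegral_shift h (- a)%R); apply: ereal_sup_ubound.
by exists (shift_nnsfun h (- a)%R) => // x /=; rewrite /shift_nnsfun_fun/= -[x in f x](subrK a).
Qed.

Lemma ge0_integral_shift (a : R) (f : R -> \bar R) : (forall x, 0 <= f x) ->
  \int[mu]_x f (x + a)%R = \int[mu]_x f x.
Proof.
move=> f0; apply/eqP; rewrite eq_le ge0_integral_shift_le//=.
have := @ge0_integral_shift_le (- a)%R (fun x => f (x + a)%R) (fun x => f0 _).
by under eq_integral do rewrite subrK.
Qed.

End lebesgue_shift_invariance.

Section iterated_integral.
Context {R : realType}.
Local Open Scope ereal_scope.

Definition tadd {k} (t a : k.-tuple R) : k.-tuple R :=
  [tuple (tnth t i + tnth a i)%R | i < k].

Definition tsub {k} (t a : k.-tuple R) : k.-tuple R :=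
  [tuple (tnth t i - tnth a i)%R | i < k].

Lemma tadd_cons k x (t : k.-tuple R) (a : k.+1.-tuple R) :
  tadd (cons_tuple x t) a = cons_tuple (x + thead a)%R (tadd t [tuple of behead a]).
Proof.
rewrite [in LHS](tuple_eta a); apply: eq_from_tnth => i.
by case: (unliftP ord0 i) => [j ->|->]; rewrite !(tnthS, tnth0, tnth_mktuple).
Qed.

Lemma iint_ge0 k (F : k.-tuple R -> \bar R) : (forall t, 0 <= F t) -> 0 <= iint F.
Proof.
elim: k F => [|k IH] F F0 /=; first exact: F0.
by apply: integral_ge0 => x _; exact: IH.
Qed.

Lemma le_iint k (F G : k.-tuple R -> \bar R) :
  (forall t, 0 <= F t) -> (forall t, F t <= G t) -> iint F <= iint G.
Proof.
elim: k F G => [|k IH] F G F0 FG /=; first exact: FG.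
apply: ge0_le_integralT => x; first exact: iint_ge0.
by apply: IH.
Qed.

Lemma iintZl_le k (c : R) (F : k.-tuple R -> \bar R) : (0 < c)%R ->
  (forall t, 0 <= F t) -> iint (fun t => c%:E * F t) <= c%:E * iint F.
Proof.
move=> c0; elim: k F => [|k IH] F F0 //=.
apply: (@le_trans _ _
  (\int[lebesgue_measure]_x (c%:E * iint (fun t => F (cons_tuple x t))))).
  apply: ge0_le_integralT => x; last exact: IH.
  by apply: iint_ge0 => t; rewrite mule_ge0// lee_fin ltW.
by apply: ge0_integralZlT_le => // x; exact: iint_ge0.
Qed.

Lemma iint_shift k (a : k.-tuple R) (F : k.-tuple R -> \bar R) :
  (forall t, 0 <= F t) -> iint (fun t => F (tadd t a)) = iint F.
Proof.
elim: k a F => [|k IH] a F F0 /=.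
  by congr F; apply: eq_from_tnth => -[].
under eq_integral do under eq_fun do rewrite tadd_cons.
under eq_integral do rewrite (IH _ (fun t => F (cons_tuple _ t)))//.
rewrite (@ge0_integral_shift _ (thead a) (fun x => iint (fun t => F (cons_tuple x t))))//.
by move=> x; exact: iint_ge0.
Qed.

End iterated_integral.

Section iterated_integral3.
Context {R : realType} {k1 k2 k3 : nat}.
Local Open Scope ereal_scope.
Implicit Types F : k1.-tuple R -> k2.-tuple R -> k3.-tuple R -> \bar R.

Definition iint3 F := iint (fun a => iint (fun b => iint (fun c => F a b c))).

Lemma le_iint3 F G : (forall a b c, 0 <= F a b c) ->
  (forall a b c, F a b c <= G a b c) -> iint3 F <= iint3 G.
Proof.
move=> F0 FG; apply: le_iint => [a|a]; first by do 2 apply: iint_ge0 => ?.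
apply: le_iint => [b|b]; first exact: iint_ge0.
exact: le_iint.
Qed.

Lemma iint3Zl_le (c : R) F : (0 < c)%R -> (forall a b d, 0 <= F a b d) ->
  iint3 (fun a b d => c%:E * F a b d) <= c%:E * iint3 F.
Proof.
move=> c0 F0; have cF0 a b d : 0 <= c%:E * F a b d by rewrite mule_ge0// lee_fin ltW.
apply: (@le_trans _ _ (iint (fun a => c%:E * iint (fun b => iint (fun d => F a b d))))).
  apply: le_iint => [a|a]; first by do 2 apply: iint_ge0 => ?.
  apply: (@le_trans _ _ (iint (fun b => c%:E * iint (fun d => F a b d)))).
    by apply: le_iint => [b|b]; [exact: iint_ge0 | exact: iintZl_le].
  by apply: iintZl_le => // b; exact: iint_ge0.
by apply: iintZl_le => // a; do 2 apply: iint_ge0 => ?.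
Qed.

Lemma iint3_shift s1 s2 s3 F : (forall a b c, 0 <= F a b c) ->
  iint3 (fun a b c => F (tadd a s1) (tadd b s2) (tadd c s3)) = iint3 F.
Proof.
move=> F0; rewrite /iint3 -[RHS](iint_shift s1); last first.
  by move=> a; do 2 apply: iint_ge0 => ?.
congr iint; apply/funext => a; rewrite -[RHS](iint_shift s2); last first.
  by move=> b; exact: iint_ge0.
by congr iint; apply/funext => b; rewrite -[RHS](iint_shift s3).
Qed.

Lemma iint3_indicator_shift_le (E E' : set (k1.-tuple R * k2.-tuple R * k3.-tuple R))
    (p : k1.-tuple R -> k2.-tuple R -> k3.-tuple R -> R) s1 s2 s3 (c : R) :
  (0 < c)%R -> (forall a b d, 0 <= p a b d)%R ->
  (forall a b d, E (a, b, d) -> E' (tadd a s1, tadd b s2, tadd d s3)) ->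
  (forall a b d, p a b d <= c * p (tadd a s1) (tadd b s2) (tadd d s3))%R ->
  iint3 (fun a b d => (\1_E (a, b, d) * p a b d)%:E)
  <= c%:E * iint3 (fun a b d => (\1_E' (a, b, d) * p a b d)%:E).
Proof.
move=> c0 p0 EE' pc.
have indic_p0 A a b d : 0 <= ((\1_A (a, b, d) * p a b d)%:E : \bar R).
  by rewrite lee_fin mulr_ge0// indicE ler0n.
rewrite -(iint3_shift s1 s2 s3 (indic_p0 E')).
apply: le_trans (iint3Zl_le c0 (fun a b d => indic_p0 _ _ _ _)).
apply: le_iint3 => [a b d|a b d]; first exact: indic_p0.
rewrite -EFinM lee_fin mulrCA !indicE.
have [/set_mem/EE' E'z|_] := boolP ((a, b, d) \in E).
  by rewrite mem_set// !mul1r.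
by rewrite mul0r mulr_ge0 ?ler0n// mulr_ge0// ltW.
Qed.

End iterated_integral3.

Section laplace.
Context {R : realType}.

Lemma lap_pdf_ge0 (l x : R) : 0 <= l -> 0 <= lap_pdf l x.
Proof. by move=> l0; rewrite mulr_ge0 ?expR_ge0// invr_ge0 mulr_ge0. Qed.

Lemma lap_pdf_shift_le (l x s : R) : 0 < l ->
  lap_pdf l x <= expR (`|s| / l) * lap_pdf l (x + s).
Proof.
move=> l0; rewrite /lap_pdf mulrCA; apply: ler_wpM2l.
  by rewrite invr_ge0 mulr_ge0// ltW.
rewrite -expRD ler_expR -!mulNr -mulrDl; apply: ler_wpM2r.
  by rewrite invr_ge0 ltW.
by have := ler_normD x s; lra.
Qed.

Lemma prod_lap_pdf_shift_le k (l : 'I_k -> R) (z s : k.-tuple R) :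
  (forall i, 0 < l i) ->
  \prod_(i < k) lap_pdf (l i) (tnth z i) <=
  expR (\sum_(i < k) `|tnth s i| / l i) * \prod_(i < k) lap_pdf (l i) (tnth (tadd z s) i).
Proof.
move=> l0; rewrite expR_sum -big_split /=; apply: ler_prod => i _.
rewrite lap_pdf_ge0 ?(ltW (l0 i))//= tnth_mktuple; exact: lap_pdf_shift_le.
Qed.

End laplace.

Section adjacency.
Context {R : realType} {n : nat}.

Lemma sum_dist_tuple1 (x y : n.-tuple R) (e : 'I_n) :
  (forall i, i != e -> tnth x i = tnth y i) ->
  \sum_(i < n) `|tnth x i - tnth y i| = `|tnth x e - tnth y e|.
Proof. by move=> xy; rewrite (bigD1 e)//= big1 ?addr0// => i /xy ->; rewrite subrr normr0. Qed.

Lemma alpha_adj_dist_le (alpha : R) (D D' : n.-tuple R * n.-tuple R) :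
  alpha_adj alpha D D' ->
  \sum_(e < n) `|tnth D.1 e - tnth D'.1 e|
  + \sum_(e < n) `|tnth D.2 e - tnth D'.2 e| <= alpha.
Proof.
have dist0 (x : n.-tuple R) : \sum_(e < n) `|tnth x e - tnth x e| = 0.
  by rewrite big1// => e _; rewrite subrr normr0.
case=> -[e [xe [xy xy']]].
  by rewrite (sum_dist_tuple1 xy) xy' dist0 addr0.
by rewrite (sum_dist_tuple1 xy) xy' dist0 add0r.
Qed.

End adjacency.

Section mplo_privacy.
Variables (R : realType) (N n m h : nat) (P : pubnet R N n m h).

Definition lmean (x : n.-tuple R) (v : 'I_m) : R :=
  (nlev P v)%:R^-1 * (\sum_(e < n | lev P e == v) tnth x e).

Definition lmeans (x : n.-tuple R) : m.-tuple R := [tuple lmean x v | v < m].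

Lemma mplo_out_shift sel (D D' : n.-tuple R * n.-tuple R) (z : noise_space R n m) :
  mplo_out P sel D z =
  mplo_out P sel D' (tadd z.1.1 (tsub D.1 D'.1),
                     tadd z.1.2 (tsub (lmeans D.1) (lmeans D'.1)),
                     tadd z.2 (tsub (lmeans D.2) (lmeans D'.2))).
Proof.
rewrite /mplo_out /=.
have -> : [tuple tnth D.1 e + tnth z.1.1 e | e < n] =
    [tuple tnth D'.1 e + tnth (tadd z.1.1 (tsub D.1 D'.1)) e | e < n].
  by apply: eq_from_tnth => e; rewrite !tnth_mktuple; ring.
by congr sel; apply: eq_from_tnth => v; rewrite !tnth_mktuple /lmean; ring.
Qed.

Lemma sum_lmean_dist_le (x y : n.-tuple R) :
  \sum_(v < m) (nlev P v)%:R * `|lmean x v - lmean y v|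
  <= \sum_(e < n) `|tnth x e - tnth y e|.
Proof.
rewrite (partition_big (lev P) predT)//=; apply: ler_sum => v _.
rewrite /lmean -mulrBr -sumrB normrM ger0_norm ?invr_ge0// mulrA.
have [->|nv0] := eqVneq ((nlev P v)%:R : R) 0.
  by rewrite mul0r mul0r sumr_ge0.
by rewrite mulfV// mul1r ler_norm_sum.
Qed.

(* The summands are the sensitivities of the three released statistics g, mu_g
   and mu_b, weighted to match their Laplace scales; each is at most alpha. *)
Lemma mplo_sensitivity_le (alpha : R) (D D' : n.-tuple R * n.-tuple R) :
  alpha_adj alpha D D' ->
  \sum_(e < n) `|tnth (tsub D.1 D'.1) e|
  + \sum_(v < m) (nlev P v)%:R * `|tnth (tsub (lmeans D.1) (lmeans D'.1)) v|
  + \sum_(v < m) (nlev P v)%:R * `|tnth (tsub (lmeans D.2) (lmeans D'.2)) v|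
  <= 3 * alpha.
Proof.
move=> /alpha_adj_dist_le adj.
have tsubE k (x y : k.-tuple R) i : tnth (tsub x y) i = tnth x i - tnth y i.
  exact: tnth_mktuple.
under eq_bigr do rewrite tsubE.
under [X in _ + X + _]eq_bigr do rewrite tsubE !tnth_mktuple.
under [X in _ + _ + X]eq_bigr do rewrite tsubE !tnth_mktuple.
have := sum_lmean_dist_le D.1 D'.1; have := sum_lmean_dist_le D.2 D'.2.
have dist_ge0 (x y : n.-tuple R) : 0 <= \sum_(e < n) `|tnth x e - tnth y e|.
  exact: sumr_ge0.
by have := dist_ge0 D.1 D'.1; have := dist_ge0 D.2 D'.2; lra.
Qed.

Definition mplo_density (alpha eps : R) (zg : n.-tuple R) (zmg zmb : m.-tuple R) : R :=
  (\prod_(e < n) lap_pdf (3 * alpha / eps) (tnth zg e))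
  * (\prod_(v < m) lap_pdf (3 * alpha / ((nlev P v)%:R * eps)) (tnth zmg v))
  * (\prod_(v < m) lap_pdf (3 * alpha / ((nlev P v)%:R * eps)) (tnth zmb v)).

Lemma mplo_noise_probE alpha eps E : mplo_noise_prob P alpha eps E =
  iint3 (fun a b c => (\1_E ((a, b, c) : noise_space R n m)
                       * mplo_density alpha eps a b c)%:E).
Proof. by rewrite /iint3; do 3 (congr iint; apply/funext => ?); rewrite !mulrA. Qed.

Lemma mplo_density_ge0 alpha eps zg zmg zmb : 0 <= alpha -> 0 <= eps ->
  0 <= mplo_density alpha eps zg zmg zmb.
Proof.
move=> a0 e0; have l_ge0 k : 0 <= 3 * alpha / (k%:R * eps).
  by rewrite divr_ge0 ?mulr_ge0.
by rewrite !mulr_ge0// prodr_ge0// => i _; rewrite lap_pdf_ge0// ?divr_ge0 ?mulr_ge0.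
Qed.

Lemma mplo_density_shift_le alpha eps zg zmg zmb s1 s2 s3 :
  0 < alpha -> 0 < eps -> (forall v, (0 < nlev P v)%N) ->
  mplo_density alpha eps zg zmg zmb <=
  expR (eps / (3 * alpha) * (\sum_(e < n) `|tnth s1 e|
                             + \sum_(v < m) (nlev P v)%:R * `|tnth s2 v|
                             + \sum_(v < m) (nlev P v)%:R * `|tnth s3 v|))
  * mplo_density alpha eps (tadd zg s1) (tadd zmg s2) (tadd zmb s3).
Proof.
move=> a0 e0 nlev_gt0.
pose l1 : R := 3 * alpha / eps.
pose l2 v : R := 3 * alpha / ((nlev P v)%:R * eps).
have l1_gt0 : 0 < l1 by rewrite divr_gt0 ?mulr_gt0.
have l2_gt0 v : 0 < l2 v by rewrite divr_gt0 ?mulr_gt0 ?ltr0n.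
have loss1 : \sum_(e < n) `|tnth s1 e| / l1 = eps / (3 * alpha) * \sum_(e < n) `|tnth s1 e|.
  by rewrite mulr_sumr; apply: eq_bigr => e _; rewrite invf_div mulrC.
have loss2 (s : m.-tuple R) : \sum_(v < m) `|tnth s v| / l2 v =
    eps / (3 * alpha) * \sum_(v < m) (nlev P v)%:R * `|tnth s v|.
  by rewrite mulr_sumr; apply: eq_bigr => v _; rewrite invf_div; ring.
have lap1 := prod_lap_pdf_shift_le zg s1 (fun=> l1_gt0).
have lap2 := prod_lap_pdf_shift_le zmg s2 l2_gt0.
have lap3 := prod_lap_pdf_shift_le zmb s3 l2_gt0.
rewrite loss1 in lap1; rewrite loss2 in lap2; rewrite loss2 in lap3.
have prod_ge0 k (l : 'I_k -> R) z : (forall i, 0 < l i) ->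
    0 <= \prod_(i < k) lap_pdf (l i) (tnth z i).
  by move=> l_gt0; apply: prodr_ge0 => i _; exact/lap_pdf_ge0/ltW.
rewrite !mulrDr !expRD /mplo_density mulrACA [X in X * (_ * _)]mulrACA.
by apply: ler_pM (ler_pM _ _ lap1 lap2) lap3; rewrite ?mulr_ge0 ?prod_ge0.
Qed.

End mplo_privacy.

Theorem theorem5 (R : realType) (N n m h : nat) (P : pubnet R N n m h)
    (alpha eps beta lam : R)
    (sel : n.-tuple R -> n.-tuple R -> m.-tuple R -> m.-tuple R ->
           n.-tuple R * n.-tuple R) :
  (forall t, 0 < Ostar P t) ->
  (forall v : 'I_m, exists e : 'I_n, lev P e = v) ->
  0 < alpha -> 0 < eps -> 0 < beta -> 0 < lam ->
  selection_rule P beta lam sel ->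
  differentially_private (alpha_adj alpha) eps
    (mplo_noise_prob P alpha eps) (mplo_out P sel).
Proof.
(* Step 4 only post-processes the noisy statistics, so the guarantee holds for
   any selection rule and OPF data, and without measurability of O. *)
move=> _ lev_surj alpha_gt0 eps_gt0 _ _ _ D D' adj O _ _.
have nlev_gt0 v : (0 < nlev P v)%N.
  by have [e ev] := lev_surj v; apply/card_gt0P; exists e; rewrite inE; apply/eqP.
rewrite !mplo_noise_probE.
apply: (iint3_indicator_shift_le (s1 := tsub D.1 D'.1)
  (s2 := tsub (lmeans P D.1) (lmeans P D'.1))
  (s3 := tsub (lmeans P D.2) (lmeans P D'.2))).
- exact: expR_gt0.
- by move=> a b d; rewrite mplo_density_ge0 ?ltW.
- by move=> a b d; rewrite /preimage /= (mplo_out_shift _ _ _ D').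
move=> a b d; apply: le_trans (mplo_density_shift_le _ _ _ _ _ _ _ _ _) _ => //.
apply: ler_wpM2r; first by rewrite mplo_density_ge0 ?ltW.
rewrite ler_expR; apply: le_trans (ler_wpM2l _ (mplo_sensitivity_le P adj)) _.
  by rewrite divr_ge0 ?mulr_ge0 ?ltW.
by rewrite divfK ?gt_eqF ?mulr_gt0.
Qed.
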